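(* (1) Any two distinct Bernoulli measures on $\Sigma^\mathbb{Z}$ induce distinct topologies on $\mathtt{CA}$ via the pseudometrics $\delta^\mu$. (2) If $\mu_p$ is a Bernoulli measure and $\nu\ne\mu_p$ is a shift-invariant Borel probability measure on $\Sigma^\mathbb{Z}$, then the topology induced by $\delta^\nu$ on $\mathtt{CA}$ differs from that induced by $\delta^{\mu_p}$.
   Context: $\Sigma$ is a finite alphabet with $|\Sigma|\ge2$. A cellular automaton (CA) is a continuous map $c:\Sigma^\mathbb{Z}\to\Sigma^\mathbb{Z}$ commuting with the shift; $\mathtt{CA}$ is the set of all CA. For $p:\Sigma\to[0,1]$ with $\sum_a p(a)=1$, the Bernoulli measure $\mu_p$ is the Borel probability measure with $\mu_p(\{x\mid x_{[n,n+|w|-1]}=w\})=\prod_{i=0}^{|w|-1}p(w_i)$ for all words $w$ and $n\in\mathbb{Z}$. For a Borel probability measure $\mu$, $\delta^\mu(c,d)=\mu(\{x\mid c(x)_0\ne d(x)_0\})$. *)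

From Stdlib Require Import Reals ZArith List.
Open Scope R_scope.

Section Defs.
Variable Sigma : Type.

Definition config := Z -> Sigma.
Definition cset := config -> Prop.

(* Product topology on Sigma^Z (Sigma discrete): U is open iff every point of U
   has a central cylinder [x_{-n..n}] contained in U. *)
Definition agree_on (x y : config) (n : nat) : Prop :=
  forall i : Z, (- Z.of_nat n <= i <= Z.of_nat n)%Z -> x i = y i.

Definition is_open (U : cset) : Prop :=
  forall x, U x -> exists n : nat, forall y, agree_on x y n -> U y.

Definition continuous (f : config -> config) : Prop :=
  forall U, is_open U -> is_open (fun x => U (f x)).

Definition shift (x : config) : config := fun i => x (i + 1)%Z.

Definition is_CA (c : config -> config) : Prop :=
  continuous c /\ forall x, c (shift x) = shift (c x).

(* Borel sigma-algebra: smallest sigma-algebra containing the open sets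
   (closed under extensional equality of predicates). *)
Inductive borel : cset -> Prop :=
| borel_open U : is_open U -> borel U
| borel_compl A : borel A -> borel (fun x => ~ A x)
| borel_union (A : nat -> cset) : (forall n, borel (A n)) ->
    borel (fun x => exists n, A n x)
| borel_ext A B : borel A -> (forall x, A x <-> B x) -> borel B.

(* Borel probability measures (values on non-Borel sets are irrelevant). *)
Definition is_prob_measure (mu : cset -> R) : Prop :=
  (forall A, borel A -> 0 <= mu A) /\
  mu (fun _ => True) = 1 /\
  (forall A : nat -> cset,
      (forall n, borel (A n)) ->
      (forall m n x, m <> n -> A m x -> A n x -> False) ->
      infinite_sum (fun n => mu (A n)) (mu (fun x => exists n, A n x))).

Definition meas_eq (mu nu : cset -> R) : Prop :=
  forall A, borel A -> mu A = nu A.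

Definition shift_invariant (mu : cset -> R) : Prop :=
  forall A, borel A -> mu (fun x => A (shift x)) = mu A.

Definition cylinder (n : Z) (w : list Sigma) : cset :=
  fun x => forall (i : nat) (a : Sigma), nth_error w i = Some a ->
             x (n + Z.of_nat i)%Z = a.

Definition word_prob (p : Sigma -> R) (w : list Sigma) : R :=
  fold_right (fun a r => p a * r) 1 w.

(* p is a probability vector on the alphabet, enumerated by the list l *)
Definition prob_vector (l : list Sigma) (p : Sigma -> R) : Prop :=
  (forall a, 0 <= p a /\ p a <= 1) /\ fold_right (fun a r => p a + r) 0 l = 1.

Definition is_bernoulli (l : list Sigma) (p : Sigma -> R) (mu : cset -> R) : Prop :=
  prob_vector l p /\ is_prob_measure mu /\
  forall (n : Z) (w : list Sigma), mu (cylinder n w) = word_prob p w.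

Definition delta (mu : cset -> R) (c d : config -> config) : R :=
  mu (fun x => c x 0%Z <> d x 0%Z).

(* Open sets of the topology on CA induced by delta^mu
   (a set of maps U is identified with U restricted to CA). *)
Definition delta_open (mu : cset -> R) (U : (config -> config) -> Prop) : Prop :=
  forall c, is_CA c -> U c ->
    exists eps, 0 < eps /\
      forall d, is_CA d -> delta mu c d < eps -> U d.

Definition same_topology (mu nu : cset -> R) : Prop :=
  forall U, (forall c, U c -> is_CA c) -> (delta_open mu U <-> delta_open nu U).

End Defs.

Arguments is_CA {Sigma}.

From Pilot Require Import Defs.
From Stdlib Require Import Reals ZArith List Lia Lra.
From Stdlib Require Import ClassicalEpsilon FunctionalExtensionality PropExtensionality.
Open Scope R_scope.

(** Both parts of the corollary follow from one rigidity statement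
    ([bernoulli_rigidity]): if [mu] is a Bernoulli measure and [nu] is a
    probability measure giving the same mass to all translates of a cylinder,
    and if [nu] is uniformly absolutely continuous w.r.t. [mu] on clopen sets
    ([mu S < eps -> nu S < c]), then [nu = mu].

    - Topology: if the [delta^nu]-topology is coarser than the [delta^mu]-one,
      the uniform absolute continuity holds ([topology_domination]); the clopen
      set [S] is realised as the disagreement set at the origin between the
      identity and the automaton [toggle S] which changes a symbol where [S] holds.
    - Rigidity: if [nu [w] > mu [w]], count non-overlapping occurrences of [w] in
      the first [N] blocks.  Chebyshev's inequality (the blocks are independent
      under [mu]) shows that a high frequency is [mu]-unlikely, while Markov's
      inequality and stationarity show it has [nu]-probability bounded below;
      hence [nu [w] <= mu [w]] for all [w], so equality since both sum to [1],
      and finally [nu = mu] by the pi-lambda uniqueness theorem. *)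

Definition ind (P : Prop) : R := if excluded_middle_informative P then 1 else 0.

Lemma ind_true (P : Prop) : P -> ind P = 1.
Proof. intro H. unfold ind. destruct (excluded_middle_informative P); tauto. Qed.

Lemma ind_false (P : Prop) : ~ P -> ind P = 0.
Proof. intro H. unfold ind. destruct (excluded_middle_informative P); tauto. Qed.

Lemma ind_bounds (P : Prop) : 0 <= ind P <= 1.
Proof. unfold ind. destruct (excluded_middle_informative P); lra. Qed.

Ltac pred_ext := apply functional_extensionality; intro; apply propositional_extensionality.

Section FiniteSums.
Variable Sigma : Type.

Definition sum_list (L : list Sigma) (g : Sigma -> R) : R :=
  fold_right (fun a r => g a + r) 0 L.

Lemma sum_list_add L f g : sum_list L (fun a => f a + g a) = sum_list L f + sum_list L g.
Proof. induction L; simpl; [lra | rewrite IHL; lra]. Qed.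

Lemma sum_list_scal L c f : sum_list L (fun a => c * f a) = c * sum_list L f.
Proof. induction L; simpl; [lra | rewrite IHL; lra]. Qed.

Lemma sum_list_ext L f g : (forall a, f a = g a) -> sum_list L f = sum_list L g.
Proof. intro H; induction L; simpl; [lra | rewrite IHL, H; lra]. Qed.

Lemma sum_list_le L f g : (forall a, f a <= g a) -> sum_list L f <= sum_list L g.
Proof. intro H; induction L; simpl; [lra | specialize (H a); lra]. Qed.

Lemma sum_list_zero L f : (forall a, In a L -> f a = 0) -> sum_list L f = 0.
Proof. induction L; simpl; intro H; auto. rewrite H, IHL; auto. lra. Qed.

Lemma sum_list_delta L b h :
  NoDup L -> In b L -> sum_list L (fun a => ind (a = b) * h a) = h b.
Proof.
  induction L as [|c L IH]; intros Hnd Hin; simpl in *; [contradiction|].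
  inversion Hnd as [|c' L' Hc HL]; subst. destruct Hin as [<- | Hin].
  - rewrite ind_true, sum_list_zero by (reflexivity || (intros a Ha;
      rewrite ind_false by (intro; subst; auto); lra)). lra.
  - rewrite ind_false by (intro; subst; auto). rewrite IH; auto. lra.
Qed.

Variable l : list Sigma.

Fixpoint sum_words (n : nat) (f : list Sigma -> R) : R :=
  match n with
  | O => f nil
  | S n => sum_list l (fun a => sum_words n (fun u => f (a :: u)))
  end.

Lemma sum_words_ext n f g :
  (forall u, length u = n -> f u = g u) -> sum_words n f = sum_words n g.
Proof.
  revert f g; induction n; intros f g H; simpl; [apply H; reflexivity|].
  apply sum_list_ext; intro a. apply IHn. intros u Hu. apply H. simpl; auto.
Qed.

Lemma sum_words_le n f g :
  (forall u, length u = n -> f u <= g u) -> sum_words n f <= sum_words n g.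
Proof.
  revert f g; induction n; intros f g H; simpl; [apply H; reflexivity|].
  apply sum_list_le; intro a. apply IHn. intros u Hu. apply H. simpl; auto.
Qed.

Lemma sum_words_add n f g :
  sum_words n (fun u => f u + g u) = sum_words n f + sum_words n g.
Proof.
  revert f g; induction n; intros f g; simpl; auto.
  rewrite <- sum_list_add. apply sum_list_ext; intro a. apply IHn.
Qed.

Lemma sum_words_scal n c f : sum_words n (fun u => c * f u) = c * sum_words n f.
Proof.
  revert f; induction n; intro f; simpl; auto.
  rewrite <- sum_list_scal. apply sum_list_ext; intro a. apply IHn.
Qed.

Lemma sum_words_zero n : sum_words n (fun _ => 0) = 0.
Proof. induction n; simpl; auto. apply sum_list_zero. intros; apply IHn. Qed.

Lemma sum_words_sum_list n L (f : Sigma -> list Sigma -> R) :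
  sum_words n (fun u => sum_list L (fun b => f b u)) = sum_list L (fun b => sum_words n (f b)).
Proof. induction L; simpl; [apply sum_words_zero | rewrite sum_words_add, IHL; reflexivity]. Qed.

Lemma sum_words_comm n k (f : list Sigma -> list Sigma -> R) :
  sum_words n (fun u => sum_words k (fun v => f u v)) =
  sum_words k (fun v => sum_words n (fun u => f u v)).
Proof.
  revert f; induction n; intro f; simpl; [reflexivity|].
  rewrite (sum_list_ext _ _ (fun a => sum_words k (fun v => sum_words n (fun u => f (a :: u) v))))
    by (intro a; apply (IHn (fun u v => f (a :: u) v))).
  symmetry; apply (sum_words_sum_list k l (fun a v => sum_words n (fun u => f (a :: u) v))).
Qed.

Lemma sum_words_app n1 n2 f :
  sum_words (n1 + n2) f = sum_words n1 (fun v => sum_words n2 (fun u => f (v ++ u))).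
Proof.
  revert f; induction n1; intro f; simpl; [reflexivity|].
  apply sum_list_ext; intro a. apply (IHn1 (fun u => f (a :: u))).
Qed.

Hypothesis Hnodup : NoDup l.
Hypothesis Hfull : forall a : Sigma, In a l.

Lemma sum_words_delta n w g :
  length w = n -> sum_words n (fun u => ind (u = w) * g u) = g w.
Proof.
  revert w g; induction n; intros w g Hw; simpl.
  - destruct w; [|discriminate]. rewrite ind_true; auto; lra.
  - destruct w as [|b w]; [discriminate|]. simpl in Hw.
    transitivity (sum_list l (fun a =>
      ind (a = b) * sum_words n (fun u => ind (u = w) * g (a :: u)))).
    + apply sum_list_ext; intro a. rewrite <- sum_words_scal. apply sum_words_ext; intros u _.
      destruct (classic (a = b)) as [-> | Hab]; [destruct (classic (u = w)) as [-> | Huw]|].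
      * rewrite !ind_true; auto. lra.
      * rewrite (ind_false (u = w)), (ind_false (b :: u = b :: w)) by congruence. lra.
      * rewrite (ind_false (a :: u = _)), (ind_false (a = b)) by congruence. lra.
    + rewrite sum_list_delta by auto. apply (IHn w (fun u => g (b :: u))); lia.
Qed.

Lemma sum_words_single_le n w h :
  length w = n -> (forall u, length u = n -> 0 <= h u) -> h w <= sum_words n h.
Proof.
  intros Hw Hh. rewrite <- (sum_words_delta n w h Hw). apply sum_words_le. intros u Hu.
  pose proof (ind_bounds (u = w)). specialize (Hh u Hu). nra.
Qed.

End FiniteSums.

Section BorelSets.
Variable Sigma : Type.
Notation cset := (cset Sigma).
Notation borel := (borel Sigma).

Lemma borel_empty : borel (fun _ => False).
Proof. apply borel_open. intros x []. Qed.

Lemma borel_full : borel (fun _ => True).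
Proof. apply borel_open. intros x _. exists 0%nat. auto. Qed.

(** The sequence [A, B, empty, empty, ...], used to derive finite additivity. *)
Definition pair_seq (A B : cset) (n : nat) : cset :=
  match n with 0 => A | 1 => B | _ => fun _ => False end.

Lemma pair_seq_union A B : (fun x => exists n, pair_seq A B n x) = (fun x => A x \/ B x).
Proof.
  pred_ext. split; [intros [[|[|n]] H]; simpl in *; tauto|].
  intros [H | H]; [exists 0%nat | exists 1%nat]; auto.
Qed.

Lemma pair_seq_disjoint A B :
  (forall x, A x -> B x -> False) ->
  forall m n x, m <> n -> pair_seq A B m x -> pair_seq A B n x -> False.
Proof. intros Hd [|[|m]] [|[|n]] x Hmn; simpl; try tauto; try lia; eauto. Qed.

Lemma borel_or A B : borel A -> borel B -> borel (fun x => A x \/ B x).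
Proof.
  intros HA HB. rewrite <- pair_seq_union. apply borel_union.
  intros [|[|n]]; simpl; auto using borel_empty.
Qed.

Lemma borel_and A B : borel A -> borel B -> borel (fun x => A x /\ B x).
Proof.
  intros HA HB. apply (borel_ext _ (fun x => ~ (~ A x \/ ~ B x))); [|intro x; tauto].
  apply borel_compl, borel_or; apply borel_compl; auto.
Qed.

Lemma borel_exists_list (L : list Sigma) (A : Sigma -> cset) :
  (forall a, borel (A a)) -> borel (fun x => exists a, In a L /\ A a x).
Proof.
  intro H. induction L as [|b L IH].
  - apply (borel_ext _ (fun _ => False)); [apply borel_empty|].
    intro x; split; [tauto | intros [a [[] _]]].
  - apply (borel_ext _ (fun x => A b x \/ exists a, In a L /\ A a x)); [apply borel_or; auto|].
    intro x; split.
    + intros [H1 | [a [H1 H2]]]; [exists b | exists a]; simpl; auto.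
    + intros [a [[<- | H1] H2]]; eauto.
Qed.

End BorelSets.

Section ProbabilityMeasures.
Variable Sigma : Type.
Notation cset := (cset Sigma).
Notation borel := (borel Sigma).
Variable mu : cset -> R.
Hypothesis Hmu : is_prob_measure Sigma mu.

Lemma measure_empty : mu (fun _ => False) = 0.
Proof.
  destruct Hmu as [_ [_ Hsum]].
  specialize (Hsum (fun _ _ => False) (fun _ => borel_empty Sigma) (fun m n x _ H _ => H)).
  cbv beta in Hsum.
  replace (fun x : config Sigma => exists n : nat, False) with (fun _ : config Sigma => False)
    in Hsum by (pred_ext; split; [intros [] | intros [_ []]]).
  set (c := mu (fun _ => False)) in *.
  (* the constant series [c + c + ...] can only converge to [c] if [c = 0] *)
  destruct (Req_dec c 0) as [|Hc]; auto. exfalso.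
  destruct (Hsum (Rabs c)) as [N HN]; [apply Rabs_pos_lt; auto|].
  specialize (HN (S N) ltac:(lia)). unfold Rdist in HN. rewrite sum_cte in HN.
  replace (c * INR (S (S N)) - c) with (INR (S N) * c) in HN by (rewrite !S_INR; ring).
  rewrite Rabs_mult, Rabs_right in HN by apply Rle_ge, pos_INR.
  assert (1 <= INR (S N)) by (rewrite S_INR; pose proof (pos_INR N); lra).
  pose proof (Rabs_pos_lt c Hc). nra.
Qed.

Lemma measure_nonneg A : borel A -> 0 <= mu A.
Proof. apply Hmu. Qed.

Lemma measure_full : mu (fun _ => True) = 1.
Proof. apply Hmu. Qed.

Lemma measure_add A B : borel A -> borel B -> (forall x, A x -> B x -> False) ->
  mu (fun x => A x \/ B x) = mu A + mu B.
Proof.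
  intros HA HB Hd. destruct Hmu as [_ [_ Hsum]].
  specialize (Hsum (pair_seq Sigma A B)). rewrite pair_seq_union in Hsum.
  eapply uniqueness_sum.
  - apply Hsum; [intros [|[|n]]; simpl; auto using borel_empty | apply pair_seq_disjoint; auto].
  - intros eps Heps. exists 1%nat. intros n Hn.
    assert (E : sum_f_R0 (fun n => mu (pair_seq Sigma A B n)) n = mu A + mu B).
    { induction n; [lia|]. destruct n; [reflexivity|].
      rewrite tech5, IHn by lia. simpl. rewrite measure_empty. lra. }
    rewrite E. unfold Rdist. rewrite Rminus_diag, Rabs_R0. lra.
Qed.

Lemma measure_compl A : borel A -> mu (fun x => ~ A x) = 1 - mu A.
Proof.
  intro HA.
  assert (E : mu (fun x => A x \/ ~ A x) = 1).
  { rewrite <- measure_full. f_equal. pred_ext. split; auto. intros _. apply classic. }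
  rewrite measure_add in E by (auto using borel_compl). lra.
Qed.

Lemma measure_mono A B : borel A -> borel B -> (forall x, A x -> B x) -> mu A <= mu B.
Proof.
  intros HA HB H.
  assert (HBA : borel (fun x => B x /\ ~ A x)) by (apply borel_and; auto using borel_compl).
  replace B with (fun x => A x \/ (B x /\ ~ A x)).
  - rewrite measure_add by (auto; tauto). pose proof (measure_nonneg _ HBA). lra.
  - pred_ext. split; [intros [H1 | [H1 _]]; auto|]. intro H1. destruct (classic (A x)); auto.
Qed.

Lemma measure_subadd A B C : borel A -> borel B -> borel C ->
  (forall x, A x -> B x \/ C x) -> mu A <= mu B + mu C.
Proof.
  intros HA HB HC H.
  assert (HCB : borel (fun x => C x /\ ~ B x)) by (apply borel_and; auto using borel_compl).
  apply Rle_trans with (mu (fun x => B x \/ (C x /\ ~ B x))).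
  - apply measure_mono; auto using borel_or. intros x Hx.
    destruct (H x Hx); auto. destruct (classic (B x)); auto.
  - rewrite measure_add by (auto; tauto).
    assert (mu (fun x => C x /\ ~ B x) <= mu C) by (apply measure_mono; tauto). lra.
Qed.

Lemma measure_exists_list (L : list Sigma) (A : Sigma -> cset) : NoDup L ->
  (forall a, borel (A a)) -> (forall a b x, a <> b -> A a x -> A b x -> False) ->
  mu (fun x => exists a, In a L /\ A a x) = sum_list Sigma L (fun a => mu (A a)).
Proof.
  intros Hnd HA Hd. induction L as [|c L IH]; simpl.
  - rewrite <- measure_empty. f_equal. pred_ext. split; [intros [a [[] _]] | tauto].
  - inversion Hnd as [|c' L' Hc HL]; subst. rewrite <- IH, <- measure_add by
      (auto using borel_exists_list; intros x H1 [b [H3 H4]];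
       apply (Hd c b x); auto; intro; subst; auto).
    f_equal. pred_ext. split.
    + intros [b [[<- | H1] Hb]]; eauto.
    + intros [Hb | [b [Hb1 Hb2]]]; [exists c | exists b]; simpl; auto.
Qed.

End ProbabilityMeasures.

Section Cylinders.
Variable Sigma : Type.
Notation cset := (cset Sigma).
Notation borel := (borel Sigma).
Notation cyl := (cylinder Sigma).

Lemma cylinder_nil a x : cyl a nil x.
Proof. intros [|i] b H; discriminate. Qed.

Lemma cylinder_cons a b u x : cyl a (b :: u) x <-> x a = b /\ cyl (a + 1) u x.
Proof.
  split.
  - intro H. split; [specialize (H 0%nat b eq_refl); rewrite Z.add_0_r in H; auto|].
    intros i c Hi. rewrite <- (H (S i) c Hi). f_equal. lia.
  - intros [H1 H2] [|i] c Hi; simpl in Hi.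
    + inversion Hi; subst. rewrite Z.add_0_r; auto.
    + rewrite <- (H2 i c Hi). f_equal. lia.
Qed.

Lemma cylinder_snoc a v b x :
  cyl a (v ++ b :: nil) x <-> cyl a v x /\ x (a + Z.of_nat (length v))%Z = b.
Proof.
  revert a; induction v as [|c v IH]; intro a; simpl.
  - rewrite cylinder_cons, Z.add_0_r. pose proof (cylinder_nil (a + 1) x).
    pose proof (cylinder_nil a x). tauto.
  - rewrite !cylinder_cons, IH.
    replace (a + 1 + Z.of_nat (length v))%Z with (a + Z.pos (Pos.of_succ_nat (length v)))%Z
      by lia. tauto.
Qed.

Lemma cylinder_open a u : is_open Sigma (cyl a u).
Proof.
  intros x Hx. exists (Z.to_nat (Z.abs a) + length u)%nat. intros y Hy i c Hi.
  rewrite <- (Hx i c Hi). symmetry. apply Hy.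
  assert (i < length u)%nat by (apply nth_error_Some; congruence). lia.
Qed.

Lemma cylinder_borel a u : borel (cyl a u).
Proof. apply borel_open, cylinder_open. Qed.

Variable l : list Sigma.
Hypothesis Hnodup : NoDup l.
Hypothesis Hfull : forall a : Sigma, In a l.

Variable mu : cset -> R.
Hypothesis Hmu : is_prob_measure Sigma mu.

Lemma measure_split_last S a v : borel S ->
  mu (fun x => S x /\ cyl a v x) =
  sum_list Sigma l (fun b => mu (fun x => S x /\ cyl a (v ++ b :: nil) x)).
Proof.
  intro HS. rewrite <- measure_exists_list; auto.
  - f_equal. pred_ext. split.
    + intros [H1 H2]. exists (x (a + Z.of_nat (length v))%Z).
      rewrite cylinder_snoc. auto.
    + intros [b [_ [H1 H2]]]. apply cylinder_snoc in H2. tauto.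
  - intro b. apply borel_and; auto using cylinder_borel.
  - intros b c x Hbc [_ H1] [_ H2]. apply cylinder_snoc in H1, H2.
    apply Hbc. destruct H1 as [_ <-], H2 as [_ <-]. auto.
Qed.

Lemma measure_split_words S a N v : borel S ->
  mu (fun x => S x /\ cyl a v x) =
  sum_words Sigma l N (fun u => mu (fun x => S x /\ cyl a (v ++ u) x)).
Proof.
  intro HS. revert v; induction N; intro v; simpl.
  - rewrite app_nil_r. reflexivity.
  - rewrite measure_split_last by auto. apply sum_list_ext. intro b. rewrite IHN.
    apply sum_words_ext. intros u _. rewrite <- app_assoc. reflexivity.
Qed.

Lemma measure_cylinder_extend a N v :
  mu (cyl a v) = sum_words Sigma l N (fun u => mu (cyl a (v ++ u))).
Proof.
  assert (E : forall w, (fun x => True /\ cyl a w x) = cyl a w) by (intro w; pred_ext; tauto).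
  rewrite <- E, (measure_split_words _ a N v (borel_full Sigma)).
  apply sum_words_ext. intros; rewrite E; auto.
Qed.

Lemma sum_words_cylinders a N : sum_words Sigma l N (fun u => mu (cyl a u)) = 1.
Proof.
  rewrite <- (measure_full Sigma mu Hmu).
  replace (fun _ : config Sigma => True) with (cyl a nil)
    by (pred_ext; split; auto using cylinder_nil).
  symmetry; apply measure_cylinder_extend.
Qed.

Lemma measure_as_word_sum S a N (Pr : list Sigma -> Prop) : borel S ->
  (forall u, length u = N -> forall x, cyl a u x -> (S x <-> Pr u)) ->
  mu S = sum_words Sigma l N (fun u => ind (Pr u) * mu (cyl a u)).
Proof.
  intros HS HP.
  replace (mu S) with (mu (fun x => S x /\ cyl a nil x))
    by (f_equal; pred_ext; split; [tauto | intro; split; auto using cylinder_nil]).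
  rewrite (measure_split_words S a N nil HS). apply sum_words_ext. intros u Hu. simpl.
  destruct (classic (Pr u)) as [H | H].
  - rewrite ind_true, Rmult_1_l by auto. f_equal. pred_ext. split; [tauto|].
    intro Hx. split; auto. apply (HP u Hu x Hx); auto.
  - rewrite ind_false, Rmult_0_l by auto. rewrite <- (measure_empty Sigma mu Hmu).
    f_equal. pred_ext. split; [intros [H1 H2]; apply H, (HP u Hu x H2); auto | tauto].
Qed.

Lemma measure_split_first c u :
  mu (cyl (c + 1) u) = sum_list Sigma l (fun b => mu (cyl c (b :: u))).
Proof.
  rewrite <- measure_exists_list; auto.
  - f_equal. pred_ext. split.
    + intro H. exists (x c). rewrite cylinder_cons. auto.
    + intros [b [_ H]]. apply cylinder_cons in H. tauto.
  - intro; apply cylinder_borel.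
  - intros b d x Hbd H1 H2. apply cylinder_cons in H1, H2. apply Hbd.
    destruct H1 as [<- _], H2 as [<- _]. auto.
Qed.

Lemma cylinder_marginal_front a k u :
  sum_words Sigma l k (fun v => mu (cyl a (v ++ u))) = mu (cyl (a + Z.of_nat k) u).
Proof.
  revert u; induction k; intro u; [simpl; rewrite Z.add_0_r; reflexivity|].
  replace (S k) with (k + 1)%nat by lia. rewrite sum_words_app. simpl.
  transitivity (sum_words Sigma l k (fun v => sum_list Sigma l (fun b => mu (cyl a (v ++ b :: u))))).
  { apply sum_words_ext. intros v _. apply sum_list_ext. intro b. rewrite <- app_assoc. reflexivity. }
  rewrite (sum_words_sum_list Sigma l k l (fun b v => mu (cyl a (v ++ b :: u)))).
  replace (a + Z.of_nat (k + 1))%Z with (a + Z.of_nat k + 1)%Z by lia.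
  rewrite measure_split_first. apply sum_list_ext. intro b. apply IHk.
Qed.

End Cylinders.

Section Uniqueness.
Variable Sigma : Type.
Notation cset := (cset Sigma).
Notation borel := (borel Sigma).
Notation cyl := (cylinder Sigma).
Notation agree := (agree_on Sigma).

Lemma agree_refl x n : agree x x n.
Proof. intros i _; auto. Qed.

Lemma agree_sym x y n : agree x y n -> agree y x n.
Proof. intros H i Hi; symmetry; auto. Qed.

Lemma agree_trans x y z n : agree x y n -> agree y z n -> agree x z n.
Proof. intros H1 H2 i Hi. rewrite H1; auto. Qed.

Lemma agree_mono x y n n' : (n <= n')%nat -> agree x y n' -> agree x y n.
Proof. intros Hn H i Hi. apply H. lia. Qed.

(** A set is locally determined (clopen) if membership depends only on a
    fixed central window [x_{-n..n}]. *)
Definition locally_determined (S : cset) : Prop :=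
  exists n, forall x y, agree x y n -> (S x <-> S y).

Lemma locally_determined_open S : locally_determined S -> is_open Sigma S.
Proof. intros [n Hn] x Hx. exists n. intros y Hy. apply (Hn x y Hy); auto. Qed.

Lemma locally_determined_borel S : locally_determined S -> borel S.
Proof. intro H. apply borel_open, locally_determined_open, H. Qed.

Lemma locally_determined_full : locally_determined (fun _ => True).
Proof. exists 0%nat. tauto. Qed.

Lemma locally_determined_and A B :
  locally_determined A -> locally_determined B -> locally_determined (fun x => A x /\ B x).
Proof.
  intros [n HA] [k HB]. exists (Nat.max n k). intros x y H.
  rewrite (HA x y), (HB x y); [tauto | |].
  - apply (agree_mono _ _ _ _ (Nat.le_max_r n k) H).
  - apply (agree_mono _ _ _ _ (Nat.le_max_l n k) H).
Qed.

(** The Dynkin system generated by [P]: closure under complements and countable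
    disjoint unions.  Two probability measures agree on it as soon as they
    agree on [P]. *)
Inductive dynkin (P : cset -> Prop) : cset -> Prop :=
| dynkin_base A : P A -> dynkin P A
| dynkin_compl A : dynkin P A -> dynkin P (fun x => ~ A x)
| dynkin_disj_union (A : nat -> cset) : (forall n, dynkin P (A n)) ->
    (forall m n x, m <> n -> A m x -> A n x -> False) ->
    dynkin P (fun x => exists n, A n x).

Section PiLambda.
Variable P : cset -> Prop.
Hypothesis HPfull : P (fun _ => True).
Hypothesis HPand : forall A B, P A -> P B -> P (fun x => A x /\ B x).

Lemma dynkin_empty : dynkin P (fun _ => False).
Proof.
  replace (fun _ : config Sigma => False) with (fun x : config Sigma => ~ True)
    by (pred_ext; tauto).
  apply dynkin_compl, dynkin_base, HPfull.
Qed.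

Lemma dynkin_or_disjoint A B : dynkin P A -> dynkin P B ->
  (forall x, A x -> B x -> False) -> dynkin P (fun x => A x \/ B x).
Proof.
  intros HA HB Hd. rewrite <- pair_seq_union. apply dynkin_disj_union.
  - intros [|[|n]]; simpl; auto using dynkin_empty.
  - apply pair_seq_disjoint; auto.
Qed.

Lemma dynkin_and_base A B : P A -> dynkin P B -> dynkin P (fun x => A x /\ B x).
Proof.
  intros HA HB. induction HB as [B HB | B HB IH | B HB IH Hd].
  - apply dynkin_base, HPand; auto.
  - replace (fun x => A x /\ ~ B x) with (fun x => ~ (~ A x \/ (A x /\ B x)))
      by (pred_ext; tauto).
    apply dynkin_compl, dynkin_or_disjoint; auto using dynkin_compl, dynkin_base. tauto.
  - replace (fun x => A x /\ exists n, B n x) with (fun x => exists n, A x /\ B n x)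
      by (pred_ext; split; [intros [n [H1 H2]] | intros [H1 [n H2]]]; eauto).
    apply dynkin_disj_union; auto. intros m n x Hmn [_ H1] [_ H2]; eauto.
Qed.

Lemma dynkin_and A B : dynkin P A -> dynkin P B -> dynkin P (fun x => A x /\ B x).
Proof.
  intros HA HB. induction HA as [A HA | A HA IH | A HA IH Hd].
  - apply dynkin_and_base; auto.
  - replace (fun x => ~ A x /\ B x) with (fun x => ~ (~ B x \/ (A x /\ B x)))
      by (pred_ext; tauto).
    apply dynkin_compl, dynkin_or_disjoint; auto using dynkin_compl. tauto.
  - replace (fun x => (exists n, A n x) /\ B x) with (fun x => exists n, A n x /\ B x)
      by (pred_ext; split; [intros [n [H1 H2]] | intros [[n H1] H2]]; eauto).
    apply dynkin_disj_union; auto. intros m n x Hmn [H1 _] [H2 _]; eauto.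
Qed.

Lemma dynkin_or A B : dynkin P A -> dynkin P B -> dynkin P (fun x => A x \/ B x).
Proof.
  intros HA HB. replace (fun x => A x \/ B x) with (fun x => ~ (~ A x /\ ~ B x))
    by (pred_ext; tauto).
  apply dynkin_compl, dynkin_and; apply dynkin_compl; auto.
Qed.

Fixpoint partial_union (A : nat -> cset) (n : nat) : cset :=
  match n with
  | O => fun _ => False
  | S n => fun x => partial_union A n x \/ A n x
  end.

Lemma partial_union_iff (A : nat -> cset) n x :
  partial_union A n x <-> exists i, (i < n)%nat /\ A i x.
Proof.
  induction n; simpl; [split; [tauto | intros [i [Hi _]]; lia]|].
  rewrite IHn. split.
  - intros [[i [Hi H]] | H]; [exists i; split; auto; lia | exists n; auto].
  - intros [i [Hi H]]. destruct (Nat.eq_dec i n); [subst; auto|].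
    left; exists i; split; auto; lia.
Qed.

(** Any countable union is the disjoint union of the [A n \ (A 0 ∪ ... ∪ A (n-1))]. *)
Lemma dynkin_union (A : nat -> cset) :
  (forall n, dynkin P (A n)) -> dynkin P (fun x => exists n, A n x).
Proof.
  intro HA.
  assert (HU : forall n, dynkin P (partial_union A n))
    by (induction n; simpl; auto using dynkin_empty, dynkin_or).
  replace (fun x => exists n, A n x) with (fun x => exists n, A n x /\ ~ partial_union A n x).
  - apply dynkin_disj_union; [intro n; apply dynkin_and; auto using dynkin_compl|].
    intros m n x Hmn [H1 H2] [H3 H4].
    destruct (Nat.lt_gt_cases m n) as [[Hlt | Hlt] _]; auto.
    + apply H4, partial_union_iff. eauto.
    + apply H2, partial_union_iff. eauto.
  - pred_ext. split; [intros [n [H _]]; eauto|].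
    intros [n Hn]. induction n as [n IH] using lt_wf_ind.
    destruct (classic (partial_union A n x)) as [H | H]; [|eauto].
    apply partial_union_iff in H. destruct H as [i [Hi H]]. apply (IH i); auto.
Qed.

End PiLambda.

(** Every Borel set lies in the Dynkin system generated by locally determined sets:
    an open set is the countable union of the sets of points whose [n]-window
    already forces membership. *)
Lemma borel_dynkin_locally_determined A : borel A -> dynkin locally_determined A.
Proof.
  intro H. induction H as [U HU | A HA IH | A HA IH | A B HA IH Hext].
  - replace U with (fun x => exists n, forall y, agree x y n -> U y).
    + apply dynkin_union; auto using locally_determined_full, locally_determined_and.
      intro n. apply dynkin_base. exists n. intros x x' Hxx'. split; intros H y Hy; apply H.
      * apply (agree_trans _ x'); auto.
      * apply (agree_trans _ x); auto using agree_sym.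
    + pred_ext. split; [intros [n Hn]; apply Hn, agree_refl | intro Hx; apply HU; auto].
  - apply dynkin_compl; auto.
  - apply dynkin_union; auto using locally_determined_full, locally_determined_and.
  - replace B with A; auto. pred_ext. auto.
Qed.

Variables mu1 mu2 : cset -> R.
Hypothesis Hmu1 : is_prob_measure Sigma mu1.
Hypothesis Hmu2 : is_prob_measure Sigma mu2.

Lemma measure_unique_locally_determined :
  (forall S, locally_determined S -> mu1 S = mu2 S) -> forall A, borel A -> mu1 A = mu2 A.
Proof.
  intros Hloc A HA. apply borel_dynkin_locally_determined in HA.
  enough (borel A /\ mu1 A = mu2 A) by tauto.
  induction HA as [A HA | A HA IH | A HA IH Hd].
  - split; auto using locally_determined_borel.
  - destruct IH as [IH1 IH2]. split; [apply borel_compl; auto|].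
    rewrite !measure_compl, IH2; auto.
  - assert (Hb : forall n, borel (A n)) by (intro n; apply IH).
    split; [apply borel_union; auto|].
    eapply uniqueness_sum; [apply Hmu1; auto|].
    replace (fun n => mu1 (A n)) with (fun n => mu2 (A n)); [apply Hmu2; auto|].
    apply functional_extensionality. intro n. symmetry; apply IH.
Qed.

Lemma agree_of_cylinder n u x y : length u = (2 * n + 1)%nat ->
  cyl (- Z.of_nat n) u x -> cyl (- Z.of_nat n) u y -> agree x y n.
Proof.
  intros Hu Hx Hy i Hi.
  set (j := Z.to_nat (i + Z.of_nat n)).
  destruct (nth_error u j) as [c|] eqn:E; [|apply nth_error_None in E; unfold j in E; lia].
  specialize (Hx j c E). specialize (Hy j c E).
  replace (- Z.of_nat n + Z.of_nat j)%Z with i in * by (unfold j; lia). congruence.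
Qed.

Variable l : list Sigma.
Hypothesis Hnodup : NoDup l.
Hypothesis Hfull : forall a : Sigma, In a l.

Lemma measure_unique_cylinder :
  (forall a u, mu1 (cyl a u) = mu2 (cyl a u)) -> forall A, borel A -> mu1 A = mu2 A.
Proof.
  intro Hc. apply measure_unique_locally_determined. intros S HS.
  pose proof HS as [n Hn].
  set (Pr := fun u => exists x, cyl (- Z.of_nat n) u x /\ S x).
  assert (HP : forall u, length u = (2 * n + 1)%nat ->
                 forall x, cyl (- Z.of_nat n) u x -> (S x <-> Pr u)).
  { intros u Hu x Hx. split; [intro; exists x; auto|].
    intros [y [Hy HSy]]. apply (Hn y x); auto. apply (agree_of_cylinder n u); auto. }
  rewrite (measure_as_word_sum Sigma l Hnodup Hfull mu1 Hmu1 S _ _ Pr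
             (locally_determined_borel S HS) HP).
  rewrite (measure_as_word_sum Sigma l Hnodup Hfull mu2 Hmu2 S _ _ Pr
             (locally_determined_borel S HS) HP).
  apply sum_words_ext. intros u _. rewrite Hc. reflexivity.
Qed.

End Uniqueness.

Section TogglingAutomata.
Variable Sigma : Type.
Notation cset := (cset Sigma).
Notation borel := (borel Sigma).
Variables a0 a1 : Sigma.
Hypothesis Ha : a0 <> a1.

(** A symbol different from the given one (this is where [|Sigma| >= 2] is used). *)
Definition other_symbol (a : Sigma) : Sigma :=
  if excluded_middle_informative (a = a0) then a1 else a0.

Lemma other_symbol_ne a : other_symbol a <> a.
Proof. unfold other_symbol. destruct (excluded_middle_informative (a = a0)); congruence. Qed.

(** For locally determined [S] this is a cellular automaton
    which differs from the identity at the origin exactly on [S]. *)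
Definition toggle (S : cset) (x : config Sigma) : config Sigma :=
  fun i => if excluded_middle_informative (S (fun j => x (j + i)%Z))
           then other_symbol (x i) else x i.

(** The window of [S] seen from site [i] moves with [i], so [toggle S] commutes with the shift. *)
Lemma toggle_is_CA S : locally_determined Sigma S -> is_CA (toggle S).
Proof.
  intros [n Hn]. split.
  - intros U HU x Hx. destruct (HU _ Hx) as [N HN]. exists (N + n)%nat.
    intros y Hy. apply HN. intros i Hi. unfold toggle.
    assert (E1 : x i = y i) by (apply Hy; lia).
    assert (E2 : S (fun j => x (j + i)%Z) <-> S (fun j => y (j + i)%Z))
      by (apply Hn; intros j Hj; apply Hy; lia).
    destruct (excluded_middle_informative (S (fun j => x (j + i)%Z)));
    destruct (excluded_middle_informative (S (fun j => y (j + i)%Z))); try tauto; congruence.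
  - intro x. apply functional_extensionality. intro i. unfold toggle, Defs.shift; cbv beta.
    replace (fun j => x (j + i + 1)%Z) with (fun j => x (j + (i + 1))%Z); [reflexivity|].
    apply functional_extensionality. intro j. f_equal. lia.
Qed.

Lemma id_is_CA : is_CA (fun x : config Sigma => x).
Proof. split; auto. intros U HU; auto. Qed.

Lemma toggle_disagreement S : (fun x => x 0%Z <> toggle S x 0%Z) = S.
Proof.
  pred_ext. unfold toggle.
  replace (fun j => x (j + 0)%Z) with x
    by (apply functional_extensionality; intro j; rewrite Z.add_0_r; auto).
  destruct (excluded_middle_informative (S x)); [|tauto].
  split; auto. intros _. apply not_eq_sym, other_symbol_ne.
Qed.

(** The disagreement set at the origin of two CA is open, so [delta] is a measure of a Borel set. *)
Lemma disagreement_open f g : is_CA f -> is_CA g ->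
  is_open Sigma (fun x => f x 0%Z <> g x 0%Z).
Proof.
  intros [Cf _] [Cg _] x Hx.
  assert (Hsym : forall b, is_open Sigma (fun z => z 0%Z = b)).
  { intros b z Hz. exists 0%nat. intros y Hy. rewrite <- Hy; auto. lia. }
  destruct (Cf _ (Hsym (f x 0%Z)) x eq_refl) as [n1 H1].
  destruct (Cg _ (Hsym (g x 0%Z)) x eq_refl) as [n2 H2].
  exists (Nat.max n1 n2). intros y Hy.
  rewrite (H1 y), (H2 y); auto.
  - apply (agree_mono _ _ _ _ _ (Nat.le_max_r n1 n2) Hy).
  - apply (agree_mono _ _ _ _ _ (Nat.le_max_l n1 n2) Hy).
Qed.

Variables mu nu : cset -> R.
Hypothesis Hnu : is_prob_measure Sigma nu.

(** If every [delta^nu]-open set of CA is [delta^mu]-open, then [nu] is uniformly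
    absolutely continuous w.r.t. [mu] on locally determined sets: apply openness
    to the [delta^nu]-ball of radius [c] around the identity, and test it on the
    automata [toggle S]. *)
Lemma topology_domination :
  (forall U, (forall c, U c -> is_CA c) -> delta_open Sigma nu U -> delta_open Sigma mu U) ->
  forall c, 0 < c -> exists eps, 0 < eps /\
    forall S, locally_determined Sigma S -> mu S < eps -> nu S < c.
Proof.
  intros Hcoarser c Hc.
  set (ball := fun d => is_CA d /\ delta Sigma nu (fun x => x) d < c).
  assert (Hball : delta_open Sigma nu ball).
  { intros d Hd [_ Hdc]. exists (c - delta Sigma nu (fun x => x) d). split; [lra|].
    intros e He Hde. split; auto. unfold delta in *.
    assert (nu (fun x => x 0%Z <> e x 0%Z) <=
            nu (fun x => x 0%Z <> d x 0%Z) + nu (fun x => d x 0%Z <> e x 0%Z)).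
    { apply (measure_subadd Sigma nu Hnu);
        try (apply borel_open, disagreement_open; auto using id_is_CA).
      intros x Hx. destruct (classic (x 0%Z = d x 0%Z)); [right; congruence | left; auto]. }
    lra. }
  apply Hcoarser in Hball; [|intros d [H _]; auto].
  destruct (Hball (fun x => x) id_is_CA) as [eps [Heps Hmu_ball]].
  { split; [apply id_is_CA|]. unfold delta.
    replace (fun x : config Sigma => x 0%Z <> x 0%Z) with (fun _ : config Sigma => False)
      by (pred_ext; tauto).
    rewrite measure_empty; auto. }
  exists eps. split; auto. intros S HS HmuS.
  destruct (Hmu_ball (toggle S)) as [_ H]; [apply toggle_is_CA; auto | |].
  - unfold delta. rewrite toggle_disagreement. auto.
  - unfold delta in H. rewrite toggle_disagreement in H. auto.
Qed.

End TogglingAutomata.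

Section WordProbabilities.
Variable Sigma : Type.
Variable l : list Sigma.
Variable p : Sigma -> R.
Hypothesis Hp : prob_vector Sigma l p.
Notation wp := (word_prob Sigma p).

Lemma word_prob_app v u : wp (v ++ u) = wp v * wp u.
Proof. induction v; simpl; [lra | rewrite IHv; lra]. Qed.

Lemma word_prob_bounds u : 0 <= wp u <= 1.
Proof. induction u; simpl; [lra|]. destruct Hp as [H _]. specialize (H a). nra. Qed.

Lemma sum_words_word_prob N : sum_words Sigma l N wp = 1.
Proof.
  induction N; simpl; auto.
  transitivity (sum_list Sigma l (fun a => p a * sum_words Sigma l N wp)).
  - apply sum_list_ext. intro a. rewrite <- sum_words_scal. reflexivity.
  - rewrite IHN. transitivity (sum_list Sigma l p); [apply sum_list_ext; intro; ring|].
    apply Hp.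
Qed.

End WordProbabilities.

Section Prefixes.
Variable Sigma : Type.
Notation cyl := (cylinder Sigma).

Fixpoint prefix (x : config Sigma) (a : Z) (N : nat) : list Sigma :=
  match N with
  | O => nil
  | S N => x a :: prefix x (a + 1)%Z N
  end.

Lemma prefix_of_cylinder u a x : cyl a u x -> prefix x a (length u) = u.
Proof.
  revert a; induction u; intros b H; simpl; auto.
  apply cylinder_cons in H. destruct H as [H1 H2]. rewrite H1, IHu; auto.
Qed.

Lemma prefix_ext N a x y :
  (forall i, (a <= i < a + Z.of_nat N)%Z -> x i = y i) -> prefix x a N = prefix y a N.
Proof.
  revert a; induction N; intros a H; simpl; auto.
  rewrite H by lia. f_equal. apply IHN. intros i Hi; apply H; lia.
Qed.

End Prefixes.

Section BlockCounts.
Variable Sigma : Type.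
Notation cset := (cset Sigma).
Notation cyl := (cylinder Sigma).
Variable l : list Sigma.
Hypothesis Hnodup : NoDup l.
Hypothesis Hfull : forall a : Sigma, In a l.
Notation sum_words := (sum_words Sigma l).

Variable m : nat.
Variable w : list Sigma.
Hypothesis Hw : length w = m.

Fixpoint block_count (k : nat) (u : list Sigma) : R :=
  match k with
  | O => 0
  | S k => ind (firstn m u = w) + block_count k (skipn m u)
  end.

Lemma block_count_bounds k u : 0 <= block_count k u <= INR k.
Proof.
  revert u; induction k; intro u; [simpl; lra|].
  pose proof (ind_bounds (firstn m u = w)). specialize (IHk (skipn m u)).
  simpl block_count. rewrite S_INR. lra.
Qed.

Lemma block_count_app k v u :
  length v = m -> block_count (S k) (v ++ u) = ind (v = w) + block_count k u.
Proof.
  intro Hv. simpl. rewrite <- Hv, firstn_app, skipn_app, Nat.sub_diag, firstn_all, skipn_all.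
  rewrite firstn_O, app_nil_r. reflexivity.
Qed.

Lemma block_count_expectation (Q : cset -> R) (alpha : R) :
  is_prob_measure Sigma Q -> (forall a, Q (cyl a w) = alpha) ->
  forall k a, sum_words (k * m) (fun u => Q (cyl a u) * block_count k u) = INR k * alpha.
Proof.
  intros HQ Halpha k. induction k; intro a; [simpl; lra|].
  change (S k * m)%nat with (m + k * m)%nat. rewrite sum_words_app.
  transitivity (sum_words m (fun v =>
      ind (v = w) * sum_words (k * m) (fun u => Q (cyl a (v ++ u)))
      + sum_words (k * m) (fun u => Q (cyl a (v ++ u)) * block_count k u))).
  { apply sum_words_ext. intros v Hv. rewrite <- sum_words_scal, <- sum_words_add.
    apply sum_words_ext. intros u Hu. rewrite block_count_app by auto. ring. }
  rewrite sum_words_add.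
  (* first block: the indicator of [w] integrates to [Q [w]_a = alpha] *)
  rewrite (sum_words_ext Sigma l m _ (fun v => ind (v = w) * Q (cyl a v)))
    by (intros v _; rewrite <- (measure_cylinder_extend Sigma l Hnodup Hfull Q HQ); reflexivity).
  rewrite sum_words_delta, Halpha by auto.
  (* remaining blocks: marginalising the first block moves the window by [m] *)
  rewrite (sum_words_comm Sigma l m (k * m) (fun v u => Q (cyl a (v ++ u)) * block_count k u)).
  rewrite (sum_words_ext Sigma l (k * m) _
             (fun u => Q (cyl (a + Z.of_nat m) u) * block_count k u)).
  - rewrite IHk, S_INR. ring.
  - intros u _. rewrite <- (cylinder_marginal_front Sigma l Hnodup Hfull Q HQ a m u).
    rewrite Rmult_comm, <- sum_words_scal. apply sum_words_ext. intros; ring.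
Qed.

Variable p : Sigma -> R.
Variable mu : cset -> R.
Hypothesis Hmu : is_bernoulli Sigma l p mu.
Notation wp := (word_prob Sigma p).

(** Bernoulli cylinders have the same mass at every position, so the mean count is [k * wp w]. *)
Lemma bernoulli_block_mean k :
  sum_words (k * m) (fun u => wp u * block_count k u) = INR k * wp w.
Proof.
  destruct Hmu as [_ [Hprob Hcyl]].
  rewrite <- (block_count_expectation mu (wp w) Hprob (fun a => Hcyl a w) k 0%Z).
  apply sum_words_ext. intros. rewrite Hcyl. reflexivity.
Qed.

(** Under the Bernoulli measure the [k] block indicators are independent with
    variance at most [1], so the variance of [block_count k] is at most [k]. *)
Lemma bernoulli_block_variance k :
  sum_words (k * m) (fun u => wp u * (block_count k u - INR k * wp w) ^ 2) <= INR k.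
Proof.
  destruct Hmu as [Hp _].
  set (beta := wp w).
  assert (Hbeta : 0 <= beta <= 1) by (apply (word_prob_bounds Sigma l p Hp)).
  induction k; [simpl; lra|].
  change (S k * m)%nat with (m + k * m)%nat. rewrite sum_words_app.
  set (V := sum_words (k * m) (fun u => wp u * (block_count k u - INR k * beta) ^ 2)) in *.
  assert (Hcentered : sum_words (k * m) (fun u => wp u * (block_count k u - INR k * beta)) = 0).
  { rewrite (sum_words_ext Sigma l _ _ (fun u => wp u * block_count k u + (- (INR k * beta)) * wp u))
      by (intros; ring).
    rewrite sum_words_add, sum_words_scal, bernoulli_block_mean,
      (sum_words_word_prob Sigma l p Hp). unfold beta. ring. }
  (* expand the square: the cross term vanishes since the tail is centered *)
  transitivity (sum_words m (fun v => wp v * (ind (v = w) - beta) ^ 2 + wp v * V)).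
  - right. apply sum_words_ext. intros v Hv.
    rewrite (sum_words_ext Sigma l _ _ (fun u => (wp v * (ind (v = w) - beta) ^ 2) * wp u
          + ((2 * wp v * (ind (v = w) - beta)) * (wp u * (block_count k u - INR k * beta))
          + wp v * (wp u * (block_count k u - INR k * beta) ^ 2)))).
    + rewrite !sum_words_add, !sum_words_scal, (sum_words_word_prob Sigma l p Hp), Hcentered.
      fold V. ring.
    + intros u Hu. rewrite block_count_app, (word_prob_app Sigma p), S_INR by auto. ring.
  - rewrite sum_words_add, (sum_words_ext Sigma l m (fun v => wp v * V) (fun v => V * wp v))
      by (intros; ring).
    rewrite sum_words_scal, (sum_words_word_prob Sigma l p Hp).
    assert (Hfirst : sum_words m (fun v => wp v * (ind (v = w) - beta) ^ 2) <= sum_words m wp).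
    { apply sum_words_le. intros v _.
      pose proof (ind_bounds (v = w)). pose proof (word_prob_bounds Sigma l p Hp v).
      assert ((ind (v = w) - beta) ^ 2 <= 1) by nra. nra. }
    rewrite (sum_words_word_prob Sigma l p Hp) in Hfirst. rewrite S_INR. lra.
Qed.

End BlockCounts.

Section FrequentBlocks.
Variable Sigma : Type.
Notation cset := (cset Sigma).
Notation cyl := (cylinder Sigma).
Variable l : list Sigma.
Hypothesis Hnodup : NoDup l.
Hypothesis Hfull : forall a : Sigma, In a l.
Notation sum_words := (sum_words Sigma l).
Variable w : list Sigma.
Notation m := (length w).
Notation count := (block_count Sigma m w).

Definition frequent (N : nat) (t : R) : cset :=
  fun x => t * INR N <= count N (prefix Sigma x 0 (N * m)).

Lemma frequent_locally_determined N t : locally_determined Sigma (frequent N t).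
Proof.
  exists (N * m)%nat. intros x y H. unfold frequent.
  rewrite (prefix_ext Sigma _ _ x y); [tauto|]. intros i Hi. apply H. lia.
Qed.

Lemma frequent_measure (Q : cset -> R) N t : is_prob_measure Sigma Q ->
  Q (frequent N t) = sum_words (N * m) (fun u => ind (t * INR N <= count N u) * Q (cyl 0 u)).
Proof.
  intro HQ. apply (measure_as_word_sum Sigma l Hnodup Hfull Q HQ);
    [apply locally_determined_borel, frequent_locally_determined|].
  intros u Hu x Hx. unfold frequent. rewrite <- Hu, (prefix_of_cylinder Sigma u 0 x Hx). tauto.
Qed.

(** Chebyshev: under the Bernoulli measure, the frequency of [w] exceeds its
    probability [beta] by [t - beta > 0] with probability at most [1/(N (t-beta)^2)]. *)
Lemma bernoulli_frequent_small p mu N t : is_bernoulli Sigma l p mu ->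
  word_prob Sigma p w < t ->
  mu (frequent N t) * (INR N * (t - word_prob Sigma p w)) ^ 2 <= INR N.
Proof.
  intros Hmu Ht. set (beta := word_prob Sigma p w) in *.
  pose proof Hmu as [Hp [Hprob Hcyl]].
  rewrite (frequent_measure mu N t Hprob), Rmult_comm, <- sum_words_scal.
  eapply Rle_trans; [|apply (bernoulli_block_variance Sigma l Hnodup Hfull m w eq_refl p mu Hmu N)].
  apply sum_words_le. intros u _. rewrite Hcyl.
  pose proof (word_prob_bounds Sigma l p Hp u). pose proof (pos_INR N).
  destruct (classic (t * INR N <= count N u)) as [Hc | Hc].
  - rewrite ind_true, Rmult_1_l, Rmult_comm by auto. apply Rmult_le_compat_l; [tauto|].
    apply pow_incr. split; [nra|]. fold beta. nra.
  - rewrite ind_false, Rmult_0_l, Rmult_0_r by auto.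
    apply Rmult_le_pos; [tauto | apply pow2_ge_0].
Qed.

(** Markov: for a measure giving mass [alpha] to every cylinder [[w]_a], the
    frequency of [w] reaches [t] with probability at least [alpha - t]. *)
Lemma stationary_frequent_large nu alpha N t : is_prob_measure Sigma nu ->
  (forall a, nu (cyl a w) = alpha) -> (0 < N)%nat -> 0 <= t ->
  alpha - t <= nu (frequent N t).
Proof.
  intros Hnu Halpha HN Ht.
  assert (HNpos : 0 < INR N) by (apply lt_0_INR; lia).
  assert (Hmean := block_count_expectation Sigma l Hnodup Hfull m w eq_refl nu alpha Hnu Halpha N 0).
  assert (Hle : sum_words (N * m) (fun u => nu (cyl 0 u) * count N u) <=
      sum_words (N * m) (fun u => INR N * (ind (t * INR N <= count N u) * nu (cyl 0 u))
                                  + t * INR N * nu (cyl 0 u))).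
  { apply sum_words_le. intros u _.
    pose proof (measure_nonneg Sigma nu Hnu _ (cylinder_borel Sigma 0 u)).
    pose proof (block_count_bounds Sigma m w N u).
    assert (0 <= t * INR N * nu (cyl 0 u)) by (apply Rmult_le_pos; [apply Rmult_le_pos|]; lra).
    destruct (classic (t * INR N <= count N u)) as [Hc | Hc].
    - rewrite ind_true by auto.
      assert (nu (cyl 0 u) * count N u <= nu (cyl 0 u) * INR N)
        by (apply Rmult_le_compat_l; lra). lra.
    - rewrite ind_false by auto.
      assert (nu (cyl 0 u) * count N u <= nu (cyl 0 u) * (t * INR N))
        by (apply Rmult_le_compat_l; lra). lra. }
  rewrite sum_words_add, !sum_words_scal, <- frequent_measure,
    (sum_words_cylinders Sigma l Hnodup Hfull nu Hnu), Hmean in Hle by auto.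
  nra.
Qed.

End FrequentBlocks.

Section BernoulliRigidity.
Variable Sigma : Type.
Notation cset := (cset Sigma).
Notation cyl := (cylinder Sigma).
Variable l : list Sigma.
Hypothesis Hnodup : NoDup l.
Hypothesis Hfull : forall a : Sigma, In a l.
Variable p : Sigma -> R.
Variables mu nu : cset -> R.
Hypothesis Hmu : is_bernoulli Sigma l p mu.
Hypothesis Hnu : is_prob_measure Sigma nu.
Hypothesis Hstat : forall a u, nu (cyl a u) = nu (cyl 0 u).
Hypothesis Hdom : forall c, 0 < c -> exists eps, 0 < eps /\
  forall S, locally_determined Sigma S -> mu S < eps -> nu S < c.
Notation wp := (word_prob Sigma p).

(** If [nu [w] > mu [w] = beta], the sets [frequent N t] (with [t] halfway
    between) have [mu]-measure tending to [0] but [nu]-measure bounded below. *)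
Lemma cylinder_mass_le w : nu (cyl 0 w) <= wp w.
Proof.
  apply Rnot_lt_le. intro Hgt.
  set (alpha := nu (cyl 0 w)) in *. set (beta := wp w) in *.
  set (c := (alpha - beta) / 2). set (t := (alpha + beta) / 2).
  assert (Hc : 0 < c) by (unfold c; lra).
  assert (Hbeta : 0 <= beta) by apply (word_prob_bounds Sigma l p (proj1 Hmu)).
  destruct (Hdom c Hc) as [eps [Heps Hsmall]].
  destruct (archimed_cor1 (eps * c ^ 2)) as [N [HN HNpos]];
    [apply Rmult_lt_0_compat; auto; apply pow_lt; auto|].
  assert (HNR : 0 < INR N) by (apply lt_0_INR; lia).
  assert (Hmu_small : mu (frequent Sigma w N t) < eps).
  { pose proof (bernoulli_frequent_small Sigma l Hnodup Hfull w p mu N t Hmu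
      ltac:(fold beta; unfold t; lra)) as Hcheb.
    fold beta in Hcheb. replace (t - beta) with c in Hcheb by (unfold t, c; lra).
    assert (1 < eps * c ^ 2 * INR N)
      by (apply (Rmult_lt_compat_r (INR N)) in HN; auto; rewrite Rinv_l in HN; lra).
    assert (0 < c ^ 2 * INR N) by (apply Rmult_lt_0_compat; auto; apply pow_lt; auto).
    assert (mu (frequent Sigma w N t) * (c ^ 2 * INR N) <= 1).
    { apply (Rmult_le_reg_r (INR N)); auto.
      replace (mu (frequent Sigma w N t) * (c ^ 2 * INR N) * INR N)
        with (mu (frequent Sigma w N t) * (INR N * c) ^ 2) by ring. lra. }
    apply (Rmult_lt_reg_r (c ^ 2 * INR N)); lra. }
  assert (Hnu_large : alpha - t <= nu (frequent Sigma w N t)).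
  { apply (stationary_frequent_large Sigma l Hnodup Hfull w nu alpha N t Hnu); auto.
    unfold t; lra. }
  specialize (Hsmall _ (frequent_locally_determined Sigma w N t) Hmu_small).
  unfold c, t in *. lra.
Qed.

(** Both families [nu [u]] and [wp u] over words of a fixed length sum to [1];
    since one dominates the other, they coincide. *)
Lemma cylinder_mass_eq v : nu (cyl 0 v) = wp v.
Proof.
  set (n := length v).
  assert (Htotal : sum_words Sigma l n (fun u => wp u + (-1) * nu (cyl 0 u)) = 0).
  { rewrite sum_words_add, sum_words_scal, (sum_words_word_prob Sigma l p (proj1 Hmu)),
      (sum_words_cylinders Sigma l Hnodup Hfull nu Hnu). ring. }
  assert (wp v + -1 * nu (cyl 0 v) <= 0).
  { rewrite <- Htotal.
    apply (sum_words_single_le Sigma l Hnodup Hfull n v (fun u => wp u + -1 * nu (cyl 0 u)));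
      auto.
    intros u _. pose proof (cylinder_mass_le u). lra. }
  pose proof (cylinder_mass_le v). lra.
Qed.

(** Stationarity transfers the equality to all cylinders, and cylinders determine measures. *)
Lemma bernoulli_rigidity : meas_eq Sigma nu mu.
Proof.
  intros A HA. apply (measure_unique_cylinder Sigma nu mu Hnu (proj1 (proj2 Hmu)) l Hnodup Hfull);
    auto.
  intros a u. rewrite Hstat, cylinder_mass_eq. symmetry. apply Hmu.
Qed.

End BernoulliRigidity.

Lemma shift_cylinder (Sigma : Type) a u :
  (fun x => cylinder Sigma a u (Defs.shift Sigma x)) = cylinder Sigma (a + 1) u.
Proof.
  pred_ext. unfold cylinder, Defs.shift.
  split; intros H i b Hi; rewrite <- (H i b Hi); f_equal; lia.
Qed.

Lemma shift_invariant_cylinder (Sigma : Type) (nu : cset Sigma -> R) :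
  shift_invariant Sigma nu -> forall a u, nu (cylinder Sigma a u) = nu (cylinder Sigma 0 u).
Proof.
  intros Hs a u.
  assert (Hstep : forall n b, nu (cylinder Sigma (b + Z.of_nat n) u) = nu (cylinder Sigma b u)).
  { induction n; intro b; [rewrite Z.add_0_r; reflexivity|].
    replace (b + Z.of_nat (S n))%Z with (b + Z.of_nat n + 1)%Z by lia.
    rewrite <- shift_cylinder, Hs by apply cylinder_borel. apply IHn. }
  destruct (Z_le_gt_dec 0 a).
  - rewrite <- (Hstep (Z.to_nat a) 0%Z). f_equal. f_equal. lia.
  - rewrite <- (Hstep (Z.to_nat (- a)) a). f_equal. f_equal. lia.
Qed.

(** Both parts reduce to the rigidity of the Bernoulli measure [mu]: equal
    topologies make [nu] dominated by [mu] (via the toggling automata), and the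
    second measure is stationary (Bernoulli, resp. shift-invariant). *)
Theorem corollary5p4 (Sigma : Type) (l : list Sigma)
  (Hnodup : NoDup l) (Hfull : forall a : Sigma, In a l) (H2 : (2 <= length l)%nat) :
  (* (1) distinct Bernoulli measures induce distinct topologies *)
  (forall (p q : Sigma -> R) (mu mu' : cset Sigma -> R),
      is_bernoulli Sigma l p mu -> is_bernoulli Sigma l q mu' ->
      ~ meas_eq Sigma mu mu' ->
      ~ same_topology Sigma mu mu') /\
  (* (2) Bernoulli vs any other shift-invariant Borel probability measure *)
  (forall (p : Sigma -> R) (mu nu : cset Sigma -> R),
      is_bernoulli Sigma l p mu ->
      is_prob_measure Sigma nu -> shift_invariant Sigma nu ->
      ~ meas_eq Sigma nu mu ->
      ~ same_topology Sigma nu mu).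
Proof.
  destruct l as [|a0 [|a1 l']] eqn:El; simpl in H2; try lia.
  assert (Ha : a0 <> a1)
    by (intros ->; inversion Hnodup as [|x y Hni]; apply Hni; simpl; auto).
  rewrite <- El in *.
  assert (Hdom : forall (mu nu : cset Sigma -> R), is_prob_measure Sigma nu ->
            same_topology Sigma nu mu -> forall c, 0 < c -> exists eps, 0 < eps /\
            forall S, locally_determined Sigma S -> mu S < eps -> nu S < c).
  { intros mu nu Hnu Htop. apply (topology_domination Sigma a0 a1 Ha mu nu Hnu).
    intros U HU. apply (Htop U HU). }
  split.
  - intros p q mu mu' Hmu Hmu' Hne Htop. apply Hne. intros A HA. symmetry.
    destruct Hmu' as [Hq [Hprob' Hcyl']].
    apply (bernoulli_rigidity Sigma l Hnodup Hfull p mu mu'); auto.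
    + intros a u. rewrite !Hcyl'. reflexivity.
    + apply Hdom; auto. intros U HU. symmetry. apply Htop; auto.
  - intros p mu nu Hmu Hnu Hs Hne Htop. apply Hne.
    apply (bernoulli_rigidity Sigma l Hnodup Hfull p mu nu); auto.
    apply shift_invariant_cylinder; auto.
Qed.
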